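(* Let $(X,d)$ be a bicomplete quasi-pseudometric space. Let $J:X\to X$ be a continuous single-valued map such that $r\,d(x,y)\le d(Jx,Jy)$ for all $x,y\in X$, for some constant $r>0$. Let $F:X\to CB(X)$ be a set-valued map such that $$H(Fx,Fy)\le \alpha\, d(Jx,Jy)\quad\text{for all }x,y\in X,$$ where $\alpha\in(0,1)$ and $r\alpha<1$. Then there exists a unique $x_0\in X$ which is both a startpoint and an endpoint of $J$ and $F$ if and only if $J$ and $F$ have the approximate mix-point property.
   Context: A quasi-pseudometric on a nonempty set $X$ is a map $d:X\times X\to[0,\infty)$ with $d(x,x)=0$ and $d(x,z)\le d(x,y)+d(y,z)$ for all $x,y,z$; it is $T_0$ if $d(x,y)=0=d(y,x)$ implies $x=y$. Write $d^s(x,y)=\max\{d(x,y),d(y,x)\}$. The space $(X,d)$ is bicomplete if $d$ is $T_0$ and the metric $d^s$ is complete. For $x\in X$ and nonempty $A\subseteq X$: $d(x,A)=\inf_{a\in A}d(x,a)$, $d(A,x)=\inf_{a\in A}d(a,x)$. For nonempty $A,B\subseteq X$: $H(A,B)=\max\{\sup_{a\in A}d(a,B),\ \sup_{b\in B}d(A,b)\}$. $CB(X)$ denotes the family of nonempty $d^s$-bounded, $\tau(d^s)$-closed subsets of $X$; continuity of $J$ is with respect to $\tau(d^s)$. For $J:X\to X$ and $F:X\to 2^X$, a point $x$ is a startpoint of $J$ and $F$ if $H(\{Jx\},Fx)=0$ and an endpoint of $J$ and $F$ if $H(Fx,\{Jx\})=0$. $J$ and $F$ have the approximate mix-point property if $\inf_{x\in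 X}\sup_{y\in Fx}d^s(Jx,y)=0$. *)

From Stdlib Require Import Reals Lra Classical.
Open Scope R_scope.

Section QPM.
Variable X : Type.
Variable d : X -> X -> R.

Definition quasi_pseudometric : Prop :=
  (forall x y, 0 <= d x y) /\ (forall x, d x x = 0) /\
  (forall x y z, d x z <= d x y + d y z).

Definition T0 : Prop := forall x y, d x y = 0 -> d y x = 0 -> x = y.

Definition ds (x y : X) : R := Rmax (d x y) (d y x).

Definition ds_cauchy (u : nat -> X) : Prop :=
  forall eps, eps > 0 -> exists N, forall m n, (m >= N)%nat -> (n >= N)%nat ->
    ds (u m) (u n) < eps.

Definition ds_converges (u : nat -> X) (x : X) : Prop :=
  forall eps, eps > 0 -> exists N, forall n, (n >= N)%nat -> ds (u n) x < eps.

Definition bicomplete : Prop :=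
  T0 /\ forall u, ds_cauchy u -> exists x, ds_converges u x.

Definition ds_continuous (J : X -> X) : Prop :=
  forall x eps, eps > 0 -> exists delta, delta > 0 /\
    forall y, ds x y < delta -> ds (J x) (J y) < eps.

Definition CB (A : X -> Prop) : Prop :=
  (exists a, A a) /\
  (exists M, forall a b, A a -> A b -> ds a b <= M) /\
  (forall x, (forall eps, eps > 0 -> exists a, A a /\ ds x a < eps) -> A x).

(* d(x,A) = inf_{a in A} d(x,a) <= c, unfolded *)
Definition dist_pt_set_le (x : X) (A : X -> Prop) (c : R) : Prop :=
  forall eps, eps > 0 -> exists a, A a /\ d x a < c + eps.
(* d(A,x) = inf_{a in A} d(a,x) <= c, unfolded *)
Definition dist_set_pt_le (A : X -> Prop) (x : X) (c : R) : Prop :=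
  forall eps, eps > 0 -> exists a, A a /\ d a x < c + eps.

(* H(A,B) <= c, i.e. max{sup_{a in A} d(a,B), sup_{b in B} d(A,b)} <= c *)
Definition H_le (A B : X -> Prop) (c : R) : Prop :=
  (forall a, A a -> dist_pt_set_le a B c) /\
  (forall b, B b -> dist_set_pt_le A b c).

Definition singleton (x : X) : X -> Prop := fun y => y = x.

(* H({Jx},Fx) = 0  (H is nonnegative, so = 0 iff <= 0) *)
Definition startpoint (J : X -> X) (F : X -> X -> Prop) (x : X) : Prop :=
  H_le (singleton (J x)) (F x) 0.
(* H(Fx,{Jx}) = 0 *)
Definition endpoint (J : X -> X) (F : X -> X -> Prop) (x : X) : Prop :=
  H_le (F x) (singleton (J x)) 0.

(* inf_x sup_{y in Fx} d^s(Jx,y) = 0 (the quantity is nonnegative as Fx is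
   nonempty), unfolded: for all eps > 0 some x has sup_{y in Fx} d^s(Jx,y) <= eps *)
Definition approx_mix_point (J : X -> X) (F : X -> X -> Prop) : Prop :=
  forall eps, eps > 0 -> exists x, forall y, F x y -> ds (J x) y <= eps.

End QPM.

Arguments quasi_pseudometric {X}. Arguments T0 {X}. Arguments ds {X}.
Arguments ds_cauchy {X}. Arguments ds_converges {X}. Arguments bicomplete {X}.
Arguments ds_continuous {X}. Arguments CB {X}. Arguments dist_pt_set_le {X}.
Arguments dist_set_pt_le {X}. Arguments H_le {X}. Arguments singleton {X}.
Arguments startpoint {X}. Arguments endpoint {X}. Arguments approx_mix_point {X}.

(* Write [mix_gap_le x a] for "sup of d^s(Jx, y) over y in Fx is at most a".
   Startpoints that are also endpoints are exactly the points with gap 0.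
   The contraction bound on H gives (1 - alpha) d(Jx, Jx') <= a + b for points
   with gaps a and b; with the expansivity of J this yields uniqueness (a = b = 0)
   and makes any sequence of points with gaps 1/(n+1) d^s-Cauchy.  At its limit x
   the gap is at most that of x_n plus 2 d^s(Jx, Jx_n), which tends to 0 by
   continuity of J. *)
From Stdlib Require Import Reals Lra Lia ClassicalEpsilon.
Open Scope R_scope.

Lemma le_ds_l {X} (d : X -> X -> R) x y : d x y <= ds d x y.
Proof. apply Rmax_l. Qed.

Lemma le_ds_r {X} (d : X -> X -> R) x y : d y x <= ds d x y.
Proof. apply Rmax_r. Qed.

Lemma ds_sym {X} (d : X -> X -> R) x y : ds d x y = ds d y x.
Proof. apply Rmax_comm. Qed.

Lemma inv_INR_S_eventually_lt (eps : R) :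
  0 < eps -> exists N, forall n, (N <= n)%nat -> / INR (S n) < eps.
Proof.
  intros eps_pos; destruct (archimed_cor1 eps eps_pos) as [N [HN N_pos]].
  exists N; intros n le_Nn.
  apply (Rle_lt_trans _ (/ INR N)); [|exact HN].
  apply Rinv_le_contravar; [apply lt_0_INR; lia | apply le_INR; lia].
Qed.

Lemma ds_cauchy_of_scaled_bound {X} (d : X -> X -> R) (u : nat -> X) (c : R) :
  0 < c -> (forall n m, c * ds d (u n) (u m) <= / INR (S n) + / INR (S m)) ->
  ds_cauchy d u.
Proof.
  intros c_pos bound eps eps_pos.
  destruct (inv_INR_S_eventually_lt (c * eps / 2)) as [N HN]; [nra|].
  exists N; intros m n le_Nm le_Nn.
  specialize (bound m n); specialize (HN m le_Nm) as Hm; specialize (HN n le_Nn).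
  apply (Rmult_lt_reg_l c); lra.
Qed.

Lemma ds_converges_continuous {X} (d : X -> X -> R) (J : X -> X) u x :
  ds_continuous d J -> ds_converges d u x -> ds_converges d (fun n => J (u n)) (J x).
Proof.
  intros cont conv eps eps_pos.
  destruct (cont x eps eps_pos) as [delta [delta_pos Hdelta]].
  destruct (conv delta delta_pos) as [N HN].
  exists N; intros n le_Nn.
  rewrite ds_sym; apply Hdelta; rewrite ds_sym; exact (HN n le_Nn).
Qed.

Section MixPoints.

Variables (X : Type) (d : X -> X -> R) (J : X -> X) (F : X -> X -> Prop).

Hypothesis d_nonneg : forall x y, 0 <= d x y.
Hypothesis d_refl : forall x, d x x = 0.
Hypothesis d_triangle : forall x y z, d x z <= d x y + d y z.
Hypothesis F_nonempty : forall x, exists y, F x y.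

Definition mix_gap_le (x : X) (a : R) : Prop := forall y, F x y -> ds d (J x) y <= a.

Lemma start_end_point_iff_mix_gap_le_0 (x : X) :
  T0 d -> startpoint d J F x /\ endpoint d J F x <-> mix_gap_le x 0.
Proof.
  intros d_T0; split.
  - intros [[_ start] [end_ _]] y Fxy.
    assert (d y (J x) <= 0).
    { apply Rle_plus_epsilon; intros eps eps_pos.
      destruct (end_ y Fxy eps eps_pos) as [a [<- Ha]]; lra. }
    assert (d (J x) y <= 0).
    { apply Rle_plus_epsilon; intros eps eps_pos.
      destruct (start y Fxy eps eps_pos) as [a [<- Ha]]; lra. }
    apply Rmax_lub; lra.
  - intros gap0.
    assert (Fx_eq : forall y, F x y -> y = J x).
    { intros y Fxy; specialize (gap0 y Fxy).
      pose proof (le_ds_l d (J x) y); pose proof (le_ds_r d (J x) y).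
      pose proof (d_nonneg y (J x)); pose proof (d_nonneg (J x) y).
      apply d_T0; lra. }
    destruct (F_nonempty x) as [b Fxb].
    split; split; intros a Ha eps eps_pos.
    + exists b; split; [exact Fxb|]. rewrite Ha, (Fx_eq b Fxb), d_refl; lra.
    + exists (J x); split; [reflexivity|]. rewrite (Fx_eq a Ha), d_refl; lra.
    + exists (J x); split; [reflexivity|]. rewrite (Fx_eq a Ha), d_refl; lra.
    + exists b; split; [exact Fxb|]. rewrite Ha, (Fx_eq b Fxb), d_refl; lra.
Qed.

Section Contraction.

Variable alpha : R.
Hypothesis alpha_lt_1 : alpha < 1.
Hypothesis F_contraction : forall x y, H_le d (F x) (F y) (alpha * d (J x) (J y)).

Lemma J_dist_le_mix_gaps (x x' : X) (a b : R) :
  mix_gap_le x a -> mix_gap_le x' b -> (1 - alpha) * d (J x) (J x') <= a + b.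
Proof.
  intros gap_x gap_x'.
  enough (d (J x) (J x') <= a + b + alpha * d (J x) (J x')) by lra.
  apply Rle_plus_epsilon; intros eps eps_pos.
  destruct (F_nonempty x) as [y Fxy].
  destruct (proj1 (F_contraction x x') y Fxy eps eps_pos) as [z [Fx'z Hyz]].
  pose proof (d_triangle (J x) y (J x')); pose proof (d_triangle y z (J x')).
  pose proof (gap_x y Fxy); pose proof (le_ds_l d (J x) y).
  pose proof (gap_x' z Fx'z); pose proof (le_ds_r d (J x') z).
  lra.
Qed.

Lemma mix_gap_le_transfer (x x' : X) (a : R) :
  mix_gap_le x' a -> mix_gap_le x (a + 2 * ds d (J x) (J x')).
Proof.
  intros gap_x' y Fxy.
  pose proof (le_ds_l d (J x) (J x')); pose proof (le_ds_r d (J x) (J x')).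
  pose proof (d_nonneg (J x) (J x')); pose proof (d_nonneg (J x') (J x)).
  assert (alpha * d (J x) (J x') <= d (J x) (J x')) by nra.
  assert (alpha * d (J x') (J x) <= d (J x') (J x)) by nra.
  apply Rmax_lub; apply Rle_plus_epsilon; intros eps eps_pos.
  - destruct (proj2 (F_contraction x' x) y Fxy eps eps_pos) as [z [Fx'z Hzy]].
    pose proof (d_triangle (J x) (J x') y); pose proof (d_triangle (J x') z y).
    pose proof (gap_x' z Fx'z); pose proof (le_ds_l d (J x') z).
    lra.
  - destruct (proj1 (F_contraction x x') y Fxy eps eps_pos) as [z [Fx'z Hyz]].
    pose proof (d_triangle y z (J x)); pose proof (d_triangle z (J x') (J x)).
    pose proof (gap_x' z Fx'z); pose proof (le_ds_r d (J x') z).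
    lra.
Qed.

Variable r : R.
Hypothesis r_pos : r > 0.
Hypothesis J_expansive : forall x y, r * d x y <= d (J x) (J y).

Lemma mix_gap_le_0_unique (x y : X) :
  T0 d -> mix_gap_le x 0 -> mix_gap_le y 0 -> x = y.
Proof.
  intros d_T0 gap_x gap_y.
  assert (d_zero : forall u v, mix_gap_le u 0 -> mix_gap_le v 0 -> d u v = 0).
  { intros u v gap_u gap_v.
    pose proof (J_dist_le_mix_gaps u v 0 0 gap_u gap_v).
    pose proof (d_nonneg (J u) (J v)); pose proof (d_nonneg u v).
    assert (d (J u) (J v) <= 0) by nra.
    pose proof (J_expansive u v); nra. }
  apply d_T0; apply d_zero; assumption.
Qed.

Lemma exists_mix_gap_le_0 :
  bicomplete d -> ds_continuous d J -> approx_mix_point d J F ->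
  exists x, mix_gap_le x 0.
Proof.
  intros [_ complete] cont approx.
  assert (approx_n : forall n : nat, exists x, mix_gap_le x (/ INR (S n))).
  { intro n; apply approx, Rinv_0_lt_compat, lt_0_INR; lia. }
  destruct (choice _ approx_n) as [xs gap_xs].
  assert (xs_cauchy : ds_cauchy d xs).
  { apply (ds_cauchy_of_scaled_bound d xs ((1 - alpha) * r)); [nra|].
    assert (Hd : forall n m, (1 - alpha) * r * d (xs n) (xs m) <= / INR (S n) + / INR (S m)).
    { intros n m.
      pose proof (J_dist_le_mix_gaps _ _ _ _ (gap_xs n) (gap_xs m)).
      pose proof (J_expansive (xs n) (xs m)).
      assert (0 < 1 - alpha) by lra.
      rewrite Rmult_assoc; apply (Rle_trans _ ((1 - alpha) * d (J (xs n)) (J (xs m))));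
        [apply Rmult_le_compat_l|]; lra. }
    intros n m; unfold ds, Rmax; destruct (Rle_dec _ _); [rewrite Rplus_comm|]; apply Hd. }
  destruct (complete xs xs_cauchy) as [x xs_to_x].
  exists x; intros y Fxy.
  apply Rle_plus_epsilon; intros eps eps_pos.
  destruct (ds_converges_continuous d J xs x cont xs_to_x (eps / 4))
    as [N1 HN1]; [lra|].
  destruct (inv_INR_S_eventually_lt (eps / 2)) as [N2 HN2]; [lra|].
  specialize (HN1 (max N1 N2) ltac:(lia)); specialize (HN2 (max N1 N2) ltac:(lia)).
  rewrite ds_sym in HN1.
  pose proof (mix_gap_le_transfer x _ _ (gap_xs (max N1 N2)) y Fxy); lra.
Qed.

End Contraction.

End MixPoints.

Theorem mainTheorem4 (X : Type) (d : X -> X -> R) (J : X -> X)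
  (F : X -> X -> Prop) (r alpha : R) :
  inhabited X ->
  quasi_pseudometric d ->
  bicomplete d ->
  ds_continuous d J ->
  r > 0 ->
  (forall x y, r * d x y <= d (J x) (J y)) ->
  (forall x, CB d (F x)) ->
  0 < alpha < 1 ->
  r * alpha < 1 ->
  (forall x y, H_le d (F x) (F y) (alpha * d (J x) (J y))) ->
  ((exists! x0, startpoint d J F x0 /\ endpoint d J F x0) <->
   approx_mix_point d J F).
Proof.
  intros _ [d_nonneg [d_refl d_triangle]] bic cont r_pos J_expansive F_CB
    [_ alpha_lt_1] _ F_contraction.
  assert (F_nonempty : forall x, exists y, F x y) by (intro x; apply (F_CB x)).
  assert (char : forall x, startpoint d J F x /\ endpoint d J F x <->
                           mix_gap_le X d J F x 0)
    by (intro x; exact (start_end_point_iff_mix_gap_le_0 X d J F d_nonneg d_refl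
                          F_nonempty x (proj1 bic))).
  split.
  - intros [x0 [start_end _]] eps eps_pos; exists x0; intros y Fx0y.
    apply char in start_end; specialize (start_end y Fx0y); lra.
  - intros approx.
    destruct (exists_mix_gap_le_0 X d J F d_nonneg d_triangle F_nonempty alpha
                alpha_lt_1 F_contraction r r_pos J_expansive bic cont approx)
      as [x0 gap_x0].
    exists x0; split; [apply char, gap_x0|].
    intros y start_end_y; apply char in start_end_y.
    exact (mix_gap_le_0_unique X d J F d_nonneg d_triangle F_nonempty alpha
             alpha_lt_1 F_contraction r r_pos J_expansive x0 y (proj1 bic)
             gap_x0 start_end_y).
Qed.
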